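(* Let $a$ and $i$ be positive integers. Then $$\binom{3a+i}{a+i}_q=\sum_{k\geq0}q^{(a-k)(i-k)}\left[\binom{i+k}{2k}_q+q^{a+i}\binom{i+k-1}{2k-1}_q\right]\binom{3a+i}{a-k}_q.$$
   Context: For nonnegative integers $n$, $[n]!_q=\prod_{j=1}^n\frac{1-q^j}{1-q}$ (with $[0]!_q=1$), and for integers $0\le k\le n$, $\binom{n}{k}_q=\frac{[n]!_q}{[k]!_q[n-k]!_q}$ (Gaussian polynomial); set $\binom{n}{k}_q=0$ if $k<0$ or $k>n$. *)

From mathcomp Require Import all_boot all_order all_algebra.
From mathcomp Require Import fraction.
Set Implicit Arguments. Unset Strict Implicit. Unset Printing Implicit Defensive.
Import Order.TTheory GRing.Theory Num.Theory.
Local Open Scope ring_scope.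

(* Gaussian polynomials are taken in the field of rational functions Q(q),
   i.e. the fraction field of {poly rat}, with q the indeterminate 'X. *)
Definition QF := {fraction {poly rat}}.
Definition qq : QF := @FracField.tofrac _ (('X : {poly rat})).

Definition qfact (n : nat) : QF :=
  \prod_(1 <= j < n.+1) ((1 - qq ^+ j) / (1 - qq)).

Definition qbinom (n k : int) : QF :=
  if (0 <= k) && (k <= n) then
    qfact `|n|%N / (qfact `|k|%N * qfact `|n - k|%N)
  else 0.

From mathcomp Require Import all_boot all_order all_algebra.
From mathcomp Require Import fraction.
From mathcomp Require Import ring zify.

(* Write B for Gaussian polynomials and [m] for q-integers.  Both sides
   satisfy the same first-order recurrence in i and agree at i = 0, so the
   identity holds for all a, i >= 0.  For the left side the recurrence is
   [a+i+1] B(3a+i+1, a+i+1) = [3a+i+1] B(3a+i, a+i).  For the right side, the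
   summands T_i(k) satisfy the WZ-type relation
     [a+i+1] T_{i+1}(k) - [3a+i+1] T_i(k) = G_i(k+1) - G_i(k),
     G_i(k) = - [3a+i+1] q^((a-k+1)(i-k+1)) B(i+k-1, 2k-2) B(3a+i, a-k),
   and G_i vanishes at k = 0 and k = a+1, so the sum telescopes.  After the
   common factors are divided out, the relation follows from the two q-Pascal
   rules and the ratio [n+1-l] B(n+1, l) = [n+1] B(n, l). *)

Set Implicit Arguments. Unset Strict Implicit. Unset Printing Implicit Defensive.
Import Order.TTheory GRing.Theory Num.Theory.
Local Open Scope ring_scope.

(* The q-integer [m]_q, for every integer m: with this extension the ratio
   identities for Gaussian polynomials below hold without side conditions. *)
Definition qint (m : int) : QF := (1 - qq ^ m) / (1 - qq).

Lemma qq_neq0 : qq != 0.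
Proof. by rewrite /qq tofrac_eq0 polyX_eq0. Qed.

Lemma qqXn_neq1 (n : nat) : (0 < n)%N -> qq ^+ n != 1.
Proof.
move=> n_gt0; rewrite /qq -tofracXn -tofrac1 tofrac_eq.
apply/eqP => /(congr1 (fun p : {poly rat} => size p)).
by rewrite size_polyXn size_poly1; case: n n_gt0.
Qed.

Lemma qqXz_neq1 (m : int) : m != 0 -> qq ^ m != 1.
Proof.
case: m => n /= m_neq0; first by apply: qqXn_neq1; rewrite lt0n.
by rewrite NegzE -invr_expz invr_eq1; apply: qqXn_neq1.
Qed.

Lemma subr1qq_neq0 : 1 - qq != 0.
Proof. by rewrite subr_eq0 eq_sym; apply: (@qqXn_neq1 1). Qed.

Lemma qint_neq0 (m : int) : m != 0 -> qint m != 0.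
Proof.
move=> m_neq0; apply: mulf_neq0; last by rewrite invr_eq0 subr1qq_neq0.
by rewrite subr_eq0 eq_sym qqXz_neq1.
Qed.

Lemma qint0 : qint 0 = 0.
Proof. by rewrite /qint expr0z subrr mul0r. Qed.

Lemma qintD (m n : int) : qint (m + n) = qint m + qq ^ m * qint n.
Proof. by rewrite /qint (expfzDr _ _ qq_neq0); ring. Qed.

Lemma qfact0 : qfact 0 = 1.
Proof. by rewrite /qfact big_geq. Qed.

Lemma qfactS (n : nat) : qfact n.+1 = qfact n * qint n.+1.
Proof. by rewrite /qfact big_nat_recr. Qed.

Lemma qfact_neq0 (n : nat) : qfact n != 0.
Proof.
elim: n => [|n IHn]; first by rewrite qfact0 oner_neq0.
by rewrite qfactS mulf_neq0 ?qint_neq0.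
Qed.

Lemma qbinom_negr (N K : int) : K < 0 -> qbinom N K = 0.
Proof. by rewrite /qbinom ltNge => /negbTE ->. Qed.

Lemma qbinom_small (N K : int) : N < K -> qbinom N K = 0.
Proof. by rewrite /qbinom ltNge => /negbTE ->; rewrite andbF. Qed.

Lemma qbinom_negl (N K : int) : N < 0 -> qbinom N K = 0.
Proof.
move=> N_lt0; have [K_lt0 | K_ge0] := ltP K 0; first exact: qbinom_negr.
by apply: qbinom_small; lia.
Qed.

Lemma qbinom0n (K : int) : K != 0 -> qbinom 0 K = 0.
Proof.
case: (ltgtP K 0) => [K_lt0 | K_gt0 | ->] // _.
  exact: qbinom_negr.
exact: qbinom_small.
Qed.

Lemma qbinom_nat (n k : nat) : (k <= n)%N ->
  qbinom n k = qfact n / (qfact k * qfact (n - k)).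
Proof. by move=> le_kn; rewrite /qbinom lez_nat le_kn subzn. Qed.

Lemma qbinomn0 (N : int) : 0 <= N -> qbinom N 0 = 1.
Proof.
by case: N => // n _; rewrite qbinom_nat // subn0 qfact0 mul1r divff ?qfact_neq0.
Qed.

Lemma qbinom_fact (n k : nat) : (k <= n)%N ->
  qbinom n k * (qfact k * qfact (n - k)) = qfact n.
Proof. by move=> le_kn; rewrite qbinom_nat // divfK // mulf_neq0 ?qfact_neq0. Qed.

Lemma mul_qint_qbinom_diag_nat (n k : nat) : (k <= n)%N ->
  qint k.+1 * qbinom n.+1 k.+1 = qint n.+1 * qbinom n k.
Proof.
move=> le_kn; apply: (mulIf (mulf_neq0 (qfact_neq0 k.+1) (qfact_neq0 (n - k)))).
have fact_n := qbinom_fact le_kn.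
have := @qbinom_fact n.+1 k.+1 le_kn; rewrite subSS !qfactS => fact_Sn.
rewrite -mulrA fact_Sn.
transitivity (qint n.+1 * qint k.+1 * (qbinom n k * (qfact k * qfact (n - k)))).
  by rewrite fact_n; ring.
by ring.
Qed.

Lemma mul_qint_qbinom_down_nat (n k : nat) : (k <= n)%N ->
  qint (n.+1 - k)%N * qbinom n.+1 k = qint n.+1 * qbinom n k.
Proof.
move=> le_kn; apply: (mulIf (mulf_neq0 (qfact_neq0 k) (qfact_neq0 (n.+1 - k)))).
have fact_n := qbinom_fact le_kn.
have := qbinom_fact (leqW le_kn); rewrite subSn // qfactS => fact_Sn.
rewrite -mulrA fact_Sn.
transitivity (qint n.+1 * qint (n - k).+1 * (qbinom n k * (qfact k * qfact (n - k)))).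
  by rewrite fact_n qfactS; ring.
by ring.
Qed.

Lemma mul_qint_qbinom_diag (N K : int) :
  qint (K + 1) * qbinom (N + 1) (K + 1) = qint (N + 1) * qbinom N K.
Proof.
case: K => [k|[|k]]; last by rewrite !qbinom_negr ?mulr0.
- have [lt_Nk | ] := ltP N k; first by rewrite !qbinom_small ?mulr0 //; lia.
  by case: N => // n le_kn; rewrite -!PoszD !addn1 mul_qint_qbinom_diag_nat.
- by rewrite NegzE addNr qint0 mul0r qbinom_negr ?mulr0.
Qed.

Lemma mul_qint_qbinom_down (N K : int) :
  qint (N + 1 - K) * qbinom (N + 1) K = qint (N + 1) * qbinom N K.
Proof.
have [K_lt0 | K_ge0] := ltP K 0; first by rewrite !qbinom_negr ?mulr0.
have [lt_NK | le_KN] := ltP N K.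
  have [-> | ] := eqVneq K (N + 1).
    by rewrite subrr qint0 mul0r qbinom_small ?mulr0 //; lia.
  by move=> ?; rewrite !qbinom_small ?mulr0 //; lia.
case: K K_ge0 le_KN => // k _; case: N => [n|n] le_kn; last by lia.
rewrite (_ : n%:Z + 1 - k%:Z = (n.+1 - k)%N); last by lia.
by rewrite -PoszD addn1 mul_qint_qbinom_down_nat.
Qed.

(* Both q-Pascal rules follow from [N+1] = [K] + q^K [N+1-K]
   = [N+1-K] + q^(N+1-K) [K]; they fail only at (N, K) = (-1, 0). *)
Lemma qbinom_pascal (N K : int) : (N != -1) || (K != 0) ->
  qbinom (N + 1) K = qbinom N (K - 1) + qq ^ K * qbinom N K.
Proof.
have [-> /= K_neq0 | N_neq /= _] := eqVneq N (-1).
  by rewrite addNr qbinom0n // !(@qbinom_negl (-1)) // mulr0 addr0.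
have qintN1_neq0 : qint (N + 1) != 0 by apply: qint_neq0; lia.
have := mul_qint_qbinom_diag N (K - 1); rewrite subrK => diag.
apply: (mulfI qintN1_neq0); rewrite mulrDr -diag mulrCA -mul_qint_qbinom_down.
by rewrite mulrA -mulrDl -qintD subrKC.
Qed.

Lemma qbinom_pascal_dual (N K : int) : (N != -1) || (K != 0) ->
  qbinom (N + 1) K = qq ^ (N + 1 - K) * qbinom N (K - 1) + qbinom N K.
Proof.
have [-> /= K_neq0 | N_neq /= _] := eqVneq N (-1).
  by rewrite addNr qbinom0n // !(@qbinom_negl (-1)) // mulr0 addr0.
have qintN1_neq0 : qint (N + 1) != 0 by apply: qint_neq0; lia.
have := mul_qint_qbinom_diag N (K - 1); rewrite subrK => diag.
apply: (mulfI qintN1_neq0); rewrite mulrDr mulrCA -diag -mul_qint_qbinom_down.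
by rewrite mulrA -mulrDl [_ + qint _]addrC -qintD subrK.
Qed.

Section TelescopingIdentity.

(* X, Y, Z stand for q^k, q^l, q^i, where l = a - k; in the lemma below
   P, B1, Bm stand for B(n, l), B(n+1, l), B(n, l-1) with n = 3a+i, and
   C1, ..., C5 for B(i+k+1, 2k), B(i+k, 2k-1), B(i+k, 2k), B(i+k-1, 2k-1),
   B(i+k-1, 2k-2). *)
Variables (F : fieldType) (q X Y Z : F).
Hypotheses (q_neq0 : q != 0) (q_neq1 : 1 - q != 0) (X_neq0 : X != 0).

Lemma telescoping_identity
    (E0 E1 E2 W s1 s0 us un um v r t P B1 Bm C1 C2 C3 C4 C5 : F) :
  E1 = E0 * Y -> E2 = E0 -> W = E0 * (q * Y * Z) / X ->
  s1 = q * X * Y * Z -> s0 = X * Y * Z ->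
  us = (1 - q * X * Y * Z) / (1 - q) ->
  un = (1 - q * X ^+ 3 * Y ^+ 3 * Z) / (1 - q) ->
  um = (1 - q * X ^+ 3 * Y ^+ 2 * Z) / (1 - q) -> um != 0 ->
  v = X ^+ 2 -> r = q * Z / X -> t = X ^+ 2 / q ->
  um * B1 = un * P -> B1 = Bm + Y * P ->
  C1 = C2 + v * C3 -> C1 = r * C2 + C3 -> C2 = C5 + t * C4 ->
  us * (E1 * (C1 + s1 * C2) * B1) - un * (E0 * (C3 + s0 * C4) * P)
    = - un * E2 * C3 * Bm - - un * W * C5 * P.
Proof.
move=> -> -> -> -> -> -> un_def um_def um_neq0 -> -> ->.
move=> B1_down B1_pascal C1_pascal C1_dual C2_pascal.
have B1E : B1 = un * P / um by rewrite -B1_down mulrC mulKf.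
have BmE : Bm = un * P / um - Y * P by rewrite -B1E B1_pascal addrK.
have C5E : C5 = C2 - X ^+ 2 / q * C4 by rewrite C2_pascal addrK.
rewrite {}C5E {}BmE {}B1E; apply/eqP; rewrite -subr_eq0; apply/eqP.
(* What is left is a combination of the two Pascal rules for C1. *)
transitivity (un * E0 * P / (um * (1 - q)) *
  (Y * (q * X * Y * Z) * (C2 + X ^+ 2 * C3 - C1)
   + Y * (C1 - (q * Z / X * C2 + C3)))).
  rewrite un_def um_def mulf_eq0 invr_eq0 negb_or (negbTE q_neq1) andbT in um_neq0 *.
  by field; rewrite um_neq0 q_neq0 q_neq1 X_neq0.
by rewrite -C1_pascal -C1_dual !subrr !mulr0 addr0 mulr0.
Qed.

End TelescopingIdentity.

Definition summand (a i k : nat) : QF :=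
  qq ^ ((a%:Z - k%:Z) * (i%:Z - k%:Z))
  * (qbinom (i%:Z + k%:Z) (2 * k%:Z)
     + qq ^+ (a + i) * qbinom (i%:Z + k%:Z - 1) (2 * k%:Z - 1))
  * qbinom (3 * a + i)%:Z (a%:Z - k%:Z).

Definition telescoper (a i k : nat) : QF :=
  - qint (3 * a + i).+1 * qq ^ ((a%:Z - k%:Z + 1) * (i%:Z - k%:Z + 1))
  * qbinom (i%:Z + k%:Z - 1) (2 * k%:Z - 2) * qbinom (3 * a + i)%:Z (a%:Z - k%:Z).

(* Reduces an equation between products of integer powers of q (possibly
   inside q-integers) to an equation between their exponents. *)
Ltac qpow_congr :=
  rewrite ?/qint; try congr ((1 - _) / _);
  rewrite -?exprM -?exprS -?exprD ?exprnP ?invr_expz -?exprN1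
    -?(expfzDr _ _ qq_neq0);
  congr (qq ^ _); nia.

Lemma summand_step (a i k : nat) : (k <= a)%N ->
  qint (a + i).+1 * summand a i.+1 k - qint (3 * a + i).+1 * summand a i k
  = telescoper a i k.+1 - telescoper a i k.
Proof.
move=> le_ka; have [l ->] : exists l, a = (k + l)%N by exists (a - k)%N; rewrite subnKC.
rewrite /summand /telescoper; set n := (3 * (k + l) + i)%N.
have -> : (3 * (k + l) + i.+1)%N = n.+1 by rewrite /n addnS.
have -> : (k + l)%N%:Z - k%:Z = l by lia.
have -> : (k + l)%N%:Z - k.+1%:Z = l%:Z - 1 by lia.
have -> : i.+1%:Z + k%:Z = i%:Z + k%:Z + 1 by lia.
have -> : i%:Z + k.+1%:Z - 1 = i%:Z + k%:Z by lia.
have -> : 2 * k.+1%:Z - 2 = 2 * k%:Z by lia.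
have -> : n.+1%:Z = n%:Z + 1 by lia.
rewrite addrK.
apply: (telescoping_identity qq_neq0 subr1qq_neq0 (expf_neq0 k qq_neq0)
  (Y := qq ^+ l) (Z := qq ^+ i) (um := qint (n%:Z + 1 - l%:Z))
  (v := qq ^ (2 * k%:Z)) (r := qq ^ (i%:Z + k%:Z + 1 - 2 * k%:Z))
  (t := qq ^ (2 * k%:Z - 1))).
all: subst n; try by qpow_congr.
- by apply: qint_neq0; lia.
- exact: mul_qint_qbinom_down.
- by apply: qbinom_pascal; lia.
- by apply: qbinom_pascal; lia.
- by apply: qbinom_pascal_dual; lia.
rewrite -[in LHS](subrK 1 (i%:Z + k%:Z)).
rewrite (_ : 2 * k%:Z - 2 = 2 * k%:Z - 1 - 1); last by lia.
by apply: qbinom_pascal; lia.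
Qed.

Lemma telescoper0 (a i : nat) : telescoper a i 0 = 0.
Proof. by rewrite /telescoper [qbinom _ (_ - 2)]qbinom_negr ?mulr0 ?mul0r. Qed.

Lemma telescoper_last (a i : nat) : telescoper a i a.+1 = 0.
Proof. by rewrite /telescoper (@qbinom_negr _ (a%:Z - a.+1%:Z)) ?mulr0 //; lia. Qed.

Lemma summand_i0 (a k : nat) :
  summand a 0 k = if k == 0%N then qbinom (3 * a)%N a else 0.
Proof.
rewrite /summand; case: k => [|k] /=.
  rewrite !subr0 mulr0 expr0z mul1r qbinomn0 // qbinom_negl // mulr0 addr0 mul1r.
  by rewrite addn0.
rewrite (@qbinom_small (0%:Z + k.+1%:Z)) ?(@qbinom_small (0%:Z + k.+1%:Z - 1)); try lia.
by rewrite mulr0 addr0 mulr0 mul0r.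
Qed.

Lemma qbinom_sum_summand (a i : nat) :
  qbinom (3 * a + i)%:Z (a + i)%:Z = \sum_(0 <= k < a.+1) summand a i k.
Proof.
elim: i => [|i IHi].
  rewrite big_nat_recl // big1 => [|k _]; last by rewrite summand_i0.
  by rewrite summand_i0 !addn0 addr0.
have := mul_qint_qbinom_diag (3 * a + i)%:Z (a + i)%:Z.
rewrite -!PoszD !addn1 IHi => diag.
rewrite !addnS; apply: (mulfI (@qint_neq0 (a + i).+1 isT)); rewrite diag.
apply/eqP; rewrite eq_sym -subr_eq0 !big_distrr -sumrB /=.
under eq_big_nat => k /andP [_ lt_ka] do rewrite summand_step //.
by rewrite telescope_sumr // telescoper_last telescoper0 subr0.
Qed.

Theorem lemma5 (a i : nat) (ha : (0 < a)%N) (hi : (0 < i)%N) :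
  qbinom (3 * a + i)%:Z (a + i)%:Z =
  \sum_(0 <= k < a.+1)
     qq ^ (((a%:Z - k%:Z) * (i%:Z - k%:Z))%R)
     * (qbinom (i%:Z + k%:Z) (2 * k%:Z)
        + qq ^+ (a + i) * qbinom (i%:Z + k%:Z - 1) (2 * k%:Z - 1))
     * qbinom (3 * a + i)%:Z (a%:Z - k%:Z).
Proof. exact: qbinom_sum_summand. Qed.
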